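(* Let $y_0=x_2x_0x_2^{-1}$. For every integer $n\ge1$, $x_0^n$ has one of the forms $M_0([11,11,11],[17,17,17],\dots)$, $M_0([11,11,11],[11,11,11],\dots)$, $M_{2^r-1}([26,26,26],[0,0,0],\dots)$ for some odd $r\ge1$, or $M_{2^r-1}([11,11,11],[0,0,0],\dots)$ for some even $r\ge2$; and for every $n\ge1$, $y_0^n$ has one of the forms $M_0([11,11,11],[44,219,177],\dots)$, $M_0([11,11,11],[54,193,171],\dots)$, $M_{2^r-1}([26,26,26],[0,157,106],\dots)$ for some odd $r\ge1$, or $M_{2^r-1}([11,11,11],[61,202,160],\dots)$ for some even $r\ge2$.
   Context: Consider infinite upper unitriangular block matrices $X=(X_{r,s})_{r,s\ge1}$ whose entries are $3\times3$ matrices over $\mathbb F_2$, with $X_{r,r}=I$, $X_{r,s}=0$ for $s<r$, and whose upper diagonals are $3$-periodic: for each $j\ge1$ there are $a_{j1},a_{j2},a_{j3}\in M(3,\mathbb F_2)$ with $X_{r,r+j}=a_{j,i}$, where $i\in\{1,2,3\}$, $i\equiv r\pmod 3$; $a_j=[a_{j1},a_{j2},a_{j3}]$ is the $j$-th upper diagonal. For $l\ge0$, $M_l(c_1,c_2,\dots)$ denotes such a matrix whose first $l$ upper diagonals are zero and whose $(l+1)$-st, $(l+2)$-nd, $\dots$ upper diagonals are $c_1,c_2,\dots$; diagonals hidden in ''$\dots$'' are unspecified, while a matrix written $M_0(c_1,\dots,c_m)$ without dots has all further diagonals zero. A matrix $u=(u_{pq})\in M(3,\mathbb F_2)$ is encoded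 by the integer $256u_{11}+128u_{12}+64u_{13}+32u_{21}+16u_{22}+8u_{23}+4u_{31}+2u_{32}+u_{33}$, and a diagonal by the triple of integers of its three blocks. The elements are $x_0=M_0([11,11,11],[17,17,17],[26,26,26],[11,11,0],[17,0,0])$, $x_2=M_0([46,68,217],[12,194,363],[26,326,77],[46,68,0],[12,0,0])$. *)

From HB Require Import structures.
From mathcomp Require Import all_boot all_order all_algebra.
Set Implicit Arguments. Unset Strict Implicit. Unset Printing Implicit Defensive.
Import GRing.Theory.
Local Open Scope ring_scope.

Notation blk := 'M['F_2]_3.

(* A 3-periodic upper unitriangular infinite block matrix X = (X_{r,s})_{r,s>=1}
   is represented by its upper diagonals: [X j i] is the block a_{j,i+1}
   (j >= 1 the diagonal index, i : 'I_3 so that i+1 is in {1,2,3}).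
   The value at j = 0 is irrelevant (the main diagonal is I). *)
Definition pmx := nat -> 'I_3 -> blk.

(* residue class of the row index r >= 1: i+1 = r mod 3 with i+1 in {1,2,3} *)
Definition phase (r : nat) : 'I_3 := inZp (r.-1).

Definition entry (X : pmx) (r s : nat) : blk :=
  if r == s then 1%:M else if (r < s)%N then X (s - r)%N (phase r) else 0.

Definition pone : pmx := fun _ _ => 0.

(* product: (XY)_{r,r+j} = sum_{k=0}^{j} X_{r,r+k} Y_{r+k,r+j}, computed at
   the representative row r = i+1 of the phase class i. *)
Definition pmul (X Y : pmx) : pmx := fun j i =>
  let r := i.+1 in \sum_(k < j.+1) entry X r (r + k) *m entry Y (r + k) (r + j).

Definition ppow (X : pmx) (n : nat) : pmx := iter n (pmul X) pone.

(* inverse, computed diagonal by diagonal from X Z = I: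
   Z_{r,r+j} = - sum_{k=1}^{j} X_{r,r+k} Z_{r+k,r+j}. [pinv_aux X n] is
   correct on diagonals 1..n. *)
Fixpoint pinv_aux (X : pmx) (n : nat) : pmx :=
  match n with
  | 0 => pone
  | n'.+1 => let Z := pinv_aux X n' in fun j i =>
      if j == n'.+1 then
        let r := i.+1 in
        - \sum_(1 <= k < j.+1) entry X r (r + k) *m entry Z (r + k) (r + j)
      else Z j i
  end.

Definition pinv (X : pmx) : pmx := fun j i => pinv_aux X j j i.

(* decoding of the integer code of a 3x3 matrix over F_2:
   code = 256 u11 + 128 u12 + 64 u13 + 32 u21 + ... + u33 *)
Definition dec (m : nat) : blk :=
  \matrix_(p < 3, q < 3) (((m %/ 2 ^ (8 - (3 * p + q))) %% 2)%N%:R : 'F_2).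

Definition dg (t : nat * nat * nat) : 'I_3 -> blk := fun i =>
  match val i with 0 => dec t.1.1 | 1 => dec t.1.2 | _ => dec t.2 end.

(* M_0(c_1,...,c_m) with all further diagonals zero *)
Definition mkM (cs : seq (nat * nat * nat)) : pmx := fun j i =>
  if (0 < j)%N then dg (nth (0, 0, 0)%N cs j.-1) i else 0.

(* X has the form M_l(c1, c2, ...): the first l upper diagonals vanish and
   the (l+1)-st and (l+2)-nd are c1, c2 (others unspecified). *)
Definition has_form (X : pmx) (l : nat) (c1 c2 : nat * nat * nat) : Prop :=
  (forall j i, (1 <= j <= l)%N -> X j i = 0) /\
  (forall i, X l.+1 i = dg c1 i) /\
  (forall i, X l.+2 i = dg c2 i).

Definition x0 : pmx :=
  mkM [:: (11, 11, 11); (17, 17, 17); (26, 26, 26); (11, 11, 0); (17, 0, 0)]%N.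
Definition x2 : pmx :=
  mkM [:: (46, 68, 217); (12, 194, 363); (26, 326, 77); (46, 68, 0); (12, 0, 0)]%N.
Definition y0 : pmx := pmul (pmul x2 x0) (pinv x2).

(* Write a unitriangular matrix as 1 + N where N vanishes below its L-th upper
   diagonal, and track only the diagonals L and L + 1 of N.  Multiplying two such
   matrices adds these diagonals (with the correction c_r c'_(r+1) on the second
   one when L = 1); in characteristic 2, squaring doubles L and, when the two
   diagonals commute, clears the second one.  For n = m 2^r with m odd this gives
   x0^n: if r = 0 the second diagonal depends on m mod 4, and if r > 0 the first
   nonzero diagonal sits at 2^r and equals a^(2^r), where a = [11] satisfies
   a^2 = [26] and [26]^2 = a.  Conjugating by x2 keeps the first nonzero diagonal c
   and turns the next one d into d + u_r c - c u_(r+L), u being the first diagonal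
   of x2; as 2^r mod 3 only depends on the parity of r, this yields y0^n. *)

From mathcomp Require Import all_boot all_order all_algebra zify.
From Stdlib Require Import FunctionalExtensionality.
Set Implicit Arguments. Unset Strict Implicit. Unset Printing Implicit Defensive.
Import GRing.Theory.
Local Open Scope ring_scope.

Section InfiniteMatrix.

Variable R : pzRingType.

Definition imx := nat -> nat -> R.

Definition mulimx (E F : imx) : imx := fun r s => \sum_(r <= k < s.+1) E r k * F k s.
Definition addimx (E F : imx) : imx := fun r s => E r s + F r s.
Definition imx1 : imx := fun r s => (r == s)%:R.
Definition expimx (E : imx) n : imx := iter n (mulimx E) imx1.

Definition upper (E : imx) := forall r s, (s < r)%N -> E r s = 0.

Lemma imxP (E F : imx) : (forall r s, E r s = F r s) -> E = F.
Proof. by move=> eEF; do 2 apply: functional_extensionality => ?; apply: eEF. Qed.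

Lemma upper_mulimx E F : upper (mulimx E F).
Proof. by move=> r s lt_sr; rewrite /mulimx big_geq. Qed.

Lemma upper_imx1 : upper imx1.
Proof. by move=> r s lt_sr; rewrite /imx1 gtn_eqF. Qed.

Lemma upper_expimx E n : upper (expimx E n).
Proof. by case: n => [|n]; [exact: upper_imx1 | exact: upper_mulimx]. Qed.

Lemma mulimxA E F G : mulimx (mulimx E F) G = mulimx E (mulimx F G).
Proof.
apply: imxP => r s; rewrite /mulimx.
under eq_bigr do rewrite mulr_suml.
under [RHS]eq_bigr do rewrite mulr_sumr.
rewrite [LHS](@eq_big_nat _ _ _ r s.+1 _
   (fun k => \sum_(r <= l < s.+1 | (l < k.+1)%N) E r l * F l k * G k s)); last first.
  by move=> k /andP[_ le_ks]; rewrite (@big_nat_widen _ _ _ r k.+1 s.+1).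
under eq_bigr do rewrite big_mkcond.
rewrite exchange_big_nat; apply: eq_big_nat => l /andP[le_rl _].
rewrite (@big_nat_widenl _ _ _ l r) // big_mkcond; apply: eq_bigr => k _.
by rewrite ltnS mulrA.
Qed.

Lemma mul1imx F : upper F -> mulimx imx1 F = F.
Proof.
move=> uF; apply: imxP => r s; rewrite /mulimx.
case: (leqP r s) => [le_rs|lt_sr]; last by rewrite big_geq // uF.
rewrite big_ltn // big_nat_cond big1 ?addr0 => [|k /andP[/andP[lt_rk _] _]].
  by rewrite /imx1 eqxx mul1r.
by rewrite /imx1 ltn_eqF // mul0r.
Qed.

Lemma mulimx1 E : upper E -> mulimx E imx1 = E.
Proof.
move=> uE; apply: imxP => r s; rewrite /mulimx.
case: (leqP r s) => [le_rs|lt_sr]; last by rewrite big_geq // uE.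
rewrite big_nat_recr //= big_nat_cond big1 ?add0r => [|k /andP[/andP[_ lt_ks] _]].
  by rewrite /imx1 eqxx mulr1.
by rewrite /imx1 ltn_eqF // mulr0.
Qed.

Lemma mulimxDl E F G : mulimx (addimx E F) G = addimx (mulimx E G) (mulimx F G).
Proof.
apply: imxP => r s; rewrite /mulimx /addimx -big_split.
by apply: eq_bigr => k _; rewrite mulrDl.
Qed.

Lemma mulimxDr E F G : mulimx E (addimx F G) = addimx (mulimx E F) (mulimx E G).
Proof.
apply: imxP => r s; rewrite /mulimx /addimx -big_split.
by apply: eq_bigr => k _; rewrite mulrDr.
Qed.

Lemma expimxS E n : expimx E n.+1 = mulimx E (expimx E n).
Proof. by []. Qed.

Lemma expimxD E m n : upper E -> expimx E (m + n) = mulimx (expimx E m) (expimx E n).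
Proof.
move=> uE; elim: m => [|m IHm]; first by rewrite mul1imx //; apply: upper_expimx.
by rewrite addSn !expimxS IHm mulimxA.
Qed.

Lemma expimxM E m n : upper E -> expimx E (m * n) = expimx (expimx E m) n.
Proof. by move=> uE; elim: n => [|n IHn]; rewrite ?muln0 // mulnS expimxD // IHn. Qed.

Lemma mulimx_linv A B C : upper A -> upper C ->
  mulimx A B = imx1 -> mulimx B C = imx1 -> mulimx B A = imx1.
Proof.
move=> uA uC AB BC; suff -> : A = C by [].
by rewrite -[A]mulimx1 // -BC -mulimxA AB mul1imx.
Qed.

Lemma expimx_conj A B E n : upper A -> mulimx A B = imx1 -> mulimx B A = imx1 ->
  expimx (mulimx (mulimx A E) B) n = mulimx (mulimx A (expimx E n)) B.
Proof.
move=> uA AB BA; elim: n => [|n IHn]; first by rewrite /= mulimx1.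
rewrite expimxS IHn !mulimxA -[mulimx B (mulimx A _)]mulimxA BA mul1imx //.
exact: upper_mulimx.
Qed.

Definition band (N : imx) L := forall r s, (s < r + L)%N -> N r s = 0.

Lemma band_upper N L : band N L -> upper N.
Proof. by move=> bN r s lt_sr; apply: bN; rewrite ltn_addr. Qed.

Lemma band_addimx N M L : band N L -> band M L -> band (addimx N M) L.
Proof. by move=> bN bM r s lt_s; rewrite /addimx bN ?bM ?addr0. Qed.

Lemma band_le N L L' : (L' <= L)%N -> band N L -> band N L'.
Proof. by move=> le_L bN r s lt_s; apply: bN; rewrite (leq_trans lt_s) ?leq_add2l. Qed.

Lemma big_nat_restrict (F : nat -> R) m n a b : (m <= a <= b)%N -> (b <= n)%N ->
  (forall k, (k < a)%N || (b <= k)%N -> F k = 0) ->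
  \sum_(m <= k < n) F k = \sum_(a <= k < b) F k.
Proof.
move=> /andP[le_ma le_ab] le_bn F0.
have out_m : \sum_(m <= k < a) F k = 0.
  by rewrite big_nat_cond big1 // => k /andP[/andP[_ lt_ka] _]; rewrite F0 ?lt_ka.
have out_n : \sum_(b <= k < n) F k = 0.
  by rewrite big_nat_cond big1 // => k /andP[/andP[le_bk _] _]; rewrite F0 ?le_bk ?orbT.
rewrite (big_cat_nat le_ma) ?(leq_trans le_ab) // (big_cat_nat le_ab) //=.
by rewrite out_m out_n add0r addr0.
Qed.

Lemma band_mulimx N M L L' : band N L -> band M L' ->
  [/\ band (mulimx N M) (L + L'),
      forall r, mulimx N M r (r + L + L')%N = N r (r + L)%N * M (r + L)%N (r + L + L')%N &
      forall r, mulimx N M r (r + L + L').+1 =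
        N r (r + L)%N * M (r + L)%N (r + L + L').+1 +
        N r (r + L).+1 * M (r + L).+1 (r + L + L').+1].
Proof.
move=> bN bM.
have NM0 r s k : (k < r + L)%N || (s < k + L')%N -> N r k * M k s = 0.
  by case/orP=> [/bN -> | /bM ->]; rewrite ?mul0r ?mulr0.
split=> [r s lt_s | r | r]; rewrite /mulimx.
- by rewrite big1 // => k _; apply: NM0; lia.
- rewrite (@big_nat_restrict _ _ _ (r + L) (r + L).+1) ?big_nat1 //; try lia.
  by move=> k k_out; apply: NM0; lia.
- rewrite (@big_nat_restrict _ _ _ (r + L) (r + L).+2); try lia.
    by rewrite big_ltn // big_nat1.
  by move=> k k_out; apply: NM0; lia.
Qed.


Definition lead_diags (N : imx) L (c d : nat -> R) := [/\ (0 < L)%N, band N L,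
  forall r, N r (r + L)%N = c r & forall r, N r (r + L).+1 = d r].

(* [Mform E L c d] is the paper's M_(L-1)(c, d, ...), the diagonals being given
   as functions of the row index. *)
Definition Mform (E : imx) L c d := exists2 N, E = addimx imx1 N & lead_diags N L c d.

Lemma eq_Mform E L c d c' d' : Mform E L c d -> c =1 c' -> d =1 d' -> Mform E L c' d'.
Proof.
move=> [N -> [L_gt0 bN cN dN]] ec ed; exists N => //.
by split=> // r; rewrite ?cN ?dN.
Qed.

Lemma Mform_upper E L c d : Mform E L c d -> upper E.
Proof.
move=> [N -> [L_gt0 bN _ _]] r s lt_sr.
by rewrite /addimx upper_imx1 // (band_upper bN) // addr0.
Qed.

Lemma Mform_imx1 L : (0 < L)%N -> Mform imx1 L (fun=> 0) (fun=> 0).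
Proof.
move=> L_gt0; exists (fun _ _ => 0); first by apply: imxP => r s; rewrite /addimx addr0.
by split.
Qed.

Lemma mulimx_unipotent N M : upper N -> upper M ->
  mulimx (addimx imx1 N) (addimx imx1 M) =
  addimx imx1 (addimx (addimx N M) (mulimx N M)).
Proof.
move=> uN uM.
rewrite mulimxDl !mulimxDr mul1imx ?mulimx1 ?mul1imx //; last exact: upper_imx1.
by apply: imxP => r s; rewrite /addimx -!addrA (addrCA (M r s)).
Qed.

Lemma mulMform1 E F c d c' d' : Mform E 1 c d -> Mform F 1 c' d' ->
  Mform (mulimx E F) 1 (fun r => c r + c' r) (fun r => d r + d' r + c r * c' r.+1).
Proof.
move=> [N -> [_ bN cN dN]] [M -> [_ bM cM dM]].
rewrite mulimx_unipotent; [|exact: band_upper bN | exact: band_upper bM].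
have [bNM cNM _] := band_mulimx bN bM.
eexists; first reflexivity; split=> // [|r|r].
- by apply: band_addimx; [apply: band_addimx | apply: band_le bNM].
- by rewrite /addimx bNM ?addr0 ?cN ?cM //; lia.
- by rewrite /addimx dN dM -[(r + 1).+1]addn1 cNM cN cM addn1.
Qed.

Lemma mulMform E F L c d c' d' : (1 < L)%N -> Mform E L c d -> Mform F L c' d' ->
  Mform (mulimx E F) L (fun r => c r + c' r) (fun r => d r + d' r).
Proof.
move=> L_gt1 [N -> [L_gt0 bN cN dN]] [M -> [_ bM cM dM]].
rewrite mulimx_unipotent; [|exact: band_upper bN | exact: band_upper bM].
have [bNM _ _] := band_mulimx bN bM.
eexists; first reflexivity; split=> // [|r|r].
- by apply: band_addimx; [apply: band_addimx | apply: band_le bNM]; rewrite // leq_addr.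
- by rewrite /addimx bNM ?addr0 ?cN ?cM //; lia.
- by rewrite /addimx bNM ?addr0 ?dN ?dM //; lia.
Qed.

Lemma expMform E L c d n : (1 < L)%N -> Mform E L c d ->
  Mform (expimx E n) L (fun r => c r *+ n) (fun r => d r *+ n).
Proof.
move=> L_gt1 EM; elim: n => [|n IHn].
  by apply: eq_Mform (Mform_imx1 (ltnW L_gt1)) _ _.
by apply: eq_Mform (mulMform L_gt1 EM IHn) _ _ => r; rewrite mulrS.
Qed.

Lemma expMform1 E c d n : Mform E 1 (fun=> c) (fun=> d) ->
  Mform (expimx E n) 1 (fun=> c *+ n) (fun=> d *+ n + (c * c) *+ 'C(n, 2)).
Proof.
move=> EM; elim: n => [|n IHn].
  by apply: eq_Mform (Mform_imx1 (ltn0Sn 0)) _ _ => r; rewrite ?addr0.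
apply: eq_Mform (mulMform1 EM IHn) _ _ => r; first by rewrite mulrS.
by rewrite mulrS binS bin1 mulrnDr mulrnAr !addrA.
Qed.

Lemma conjMform A B E L a a' b b' c d :
  Mform A 1 a a' -> Mform B 1 b b' -> mulimx A B = imx1 -> Mform E L c d ->
  Mform (mulimx (mulimx A E) B) L c (fun r => d r + a r * c r.+1 + c r * b (r + L)%N).
Proof.
move=> AM BM AB [N -> [L_gt0 bN cN dN]].
have uN := band_upper bN; have uA := Mform_upper AM.
rewrite mulimxDr mulimx1 // mulimxDl AB.
case: AM => NA -> [_ bA cA _]; case: BM => NB -> [_ bB cB _].
have [bAN cAN _] := band_mulimx bA bN.
have [bNB cNB _] := band_mulimx bN bB.
have [bANB _ _] := band_mulimx bAN bB.
set ANB := mulimx (mulimx (addimx imx1 NA) N) (addimx imx1 NB).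
have -> : ANB = addimx (addimx N (mulimx N NB))
    (addimx (mulimx NA N) (mulimx (mulimx NA N) NB)).
  rewrite /ANB mulimxDl mul1imx // mulimxDl !mulimxDr !mulimx1 //.
  exact: upper_mulimx.
eexists; first reflexivity; split=> // [|r|r].
- apply: band_addimx; apply: band_addimx => //.
  + by apply: band_le bNB; rewrite leq_addr.
  + by apply: band_le bAN; rewrite leq_addl.
  + by apply: band_le bANB; lia.
- by rewrite /addimx cN bNB ?bAN ?bANB ?addr0 //; lia.
- rewrite /addimx dN -[(r + L).+1]addn1 cNB cN cB addnAC cAN cA cN bANB; last by lia.
  by rewrite addr0 addn1 addrAC.
Qed.

End InfiniteMatrix.

Section CharTwo.

Variable R : nzRingType.
Hypothesis pcharR2 : 2 \in [pchar R].

Lemma mulrn_pchar2 (x : R) n : x *+ n = x *+ odd n.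
Proof. by rewrite -[LHS]mulr_natr -(GRing.natr_mod_pchar pcharR2) modn2 mulr_natr. Qed.

Lemma sqrMform (E : imx R) L c d : GRing.comm c d -> Mform E L (fun=> c) (fun=> d) ->
  Mform (mulimx E E) (L + L) (fun=> c * c) (fun=> 0).
Proof.
move=> cd [N -> [L_gt0 bN cN dN]].
rewrite mulimx_unipotent; [|exact: band_upper bN | exact: band_upper bN].
have [bNN cNN dNN] := band_mulimx bN bN.
have -> : addimx (addimx N N) (mulimx N N) = mulimx N N.
  by apply: imxP => r s; rewrite /addimx addrr_pchar2 // add0r.
eexists; first reflexivity; split=> [||r|r] //; first by rewrite addn_gt0 L_gt0.
- by rewrite addnA cNN !cN.
- rewrite addnA dNN !dN -[(r + L + L).+1]addSn !cN cd.
  exact: addrr_pchar2.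
Qed.

Lemma expMform_pow2 (E : imx R) L c d r : GRing.comm c d ->
  Mform E L (fun=> c) (fun=> d) ->
  Mform (expimx E (2 ^ r.+1)) (2 ^ r.+1 * L) (fun=> c ^+ (2 ^ r.+1)%N) (fun=> 0).
Proof.
move=> cd EM; have uE := Mform_upper EM.
have expimx2 (P : imx R) : upper P -> expimx P 2 = mulimx P P.
  by move=> uP; rewrite /= mulimx1.
elim: r => [|r IHr].
  rewrite expimx2 // expn1 mul2n -addnn.
  exact: eq_Mform (sqrMform cd EM) _ _.
set k := (2 ^ r.+1)%N in IHr *.
have -> : (2 ^ r.+2 = k * 2)%N by rewrite expnS mulnC.
have -> : (k * 2 * L = k * L + k * L)%N by rewrite mulnAC muln2 addnn.
rewrite expimxM // expimx2; last exact: upper_expimx.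
by apply: eq_Mform (sqrMform (commr0 _) IHr) _ _ => s //=; rewrite exprM expr2.
Qed.

End CharTwo.

Definition imx_of (X : pmx) : imx blk := fun r s => entry X r.+1 s.+1.

Lemma entry_shift X a k : entry X a (a + k) = if k == 0%N then 1%:M else X k (phase a).
Proof.
rewrite /entry; case: k => [|k]; first by rewrite addn0 eqxx.
have lt_ak : (a < a + k.+1)%N by rewrite addnS ltnS leq_addr.
by rewrite ltn_eqF // lt_ak addKn.
Qed.

Lemma entry_translate X a b a' b' : (a <= b)%N -> (a' <= b')%N ->
  (b - a = b' - a')%N -> phase a = phase a' -> entry X a b = entry X a' b'.
Proof.
move=> le_ab le_ab' eq_diff eq_phase.
by rewrite -(subnKC le_ab) -(subnKC le_ab') !entry_shift eq_diff eq_phase.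
Qed.

Lemma imx_of_diag X r : imx_of X r r = 1.
Proof. by rewrite /imx_of /entry eqxx. Qed.

Lemma upper_imx_of X : upper (imx_of X).
Proof. by move=> r s lt_sr; rewrite /imx_of /entry gtn_eqF // ltnNge ltnW. Qed.

Lemma imx_of_shift X r k : (0 < k)%N -> imx_of X r (r + k)%N = X k (inZp r).
Proof. by case: k => // k _; rewrite /imx_of -addSn entry_shift. Qed.

Lemma imx_of_pone : imx_of pone = imx1 _.
Proof.
apply: imxP => r s; rewrite /imx_of /entry /imx1 eqSS.
by case: eqP => // _; case: ifP.
Qed.

Lemma imx_of_pmul X Y : imx_of (pmul X Y) = mulimx (imx_of X) (imx_of Y).
Proof.
apply: imxP => r s; rewrite /mulimx.
case: (ltngtP r s) => [lt_rs|lt_sr|<-]; last 2 first.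
- by rewrite big_geq // upper_imx_of.
- by rewrite big_nat1 !imx_of_diag mulr1.
rewrite {1}/imx_of /entry eqSS ltn_eqF // ltnS lt_rs /pmul.
rewrite [RHS](@big_addn _ _ _ 0 s.+1 r) (subSn (ltnW lt_rs)) subSS big_mkord.
apply: eq_bigr => k _; have le_k := ltn_ord k.
rewrite /imx_of; congr (_ * _); apply: entry_translate; try lia.
- by apply: val_inj => /=; rewrite modn_mod.
- by apply: val_inj; rewrite /= modnDml addnC.
Qed.

Lemma imx_of_ppow X n : imx_of (ppow X n) = expimx (imx_of X) n.
Proof.
elim: n => [|n IHn]; first exact: imx_of_pone.
by rewrite /ppow /= -/(ppow X n) imx_of_pmul IHn.
Qed.

Lemma pinv_aux_stable X n m i : (0 < m <= n)%N -> pinv_aux X n m i = pinv_aux X m m i.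
Proof.
elim: n => [|n IHn]; first by case: m => //; rewrite andbF.
move=> /andP[m_gt0 le_mn]; case: (m =P n.+1) => [-> //|/eqP ne_m].
by rewrite [LHS]/= (negbTE ne_m) IHn // m_gt0 -ltnS ltn_neqAle ne_m.
Qed.

Lemma entry_pinv_aux X n a b : (b - a <= n)%N ->
  entry (pinv_aux X n) a b = entry (pinv X) a b.
Proof.
move=> le_n; rewrite /entry; case: eqP => // _; case: ltnP => // lt_ab.
by rewrite /pinv pinv_aux_stable // subn_gt0 lt_ab.
Qed.

Lemma imx_of_pinv X : mulimx (imx_of X) (imx_of (pinv X)) = imx1 _.
Proof.
apply: imxP => r s; rewrite /mulimx /imx1.
case: (ltngtP r s) => [lt_rs|lt_sr|<-]; last 2 first.
- by rewrite big_geq // gtn_eqF.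
- by rewrite big_nat1 !imx_of_diag mulr1.
rewrite big_ltn; last exact: ltnW.
rewrite imx_of_diag mul1r.
rewrite {1}/imx_of /entry eqSS ltn_eqF // ltnS lt_rs /pinv subSS.
case def_j: (s - r)%N => [|j]; first by move: lt_rs; rewrite -subn_gt0 def_j.
rewrite [pinv_aux _ _ _ _]/= eqxx.
rewrite [X in _ + X](@big_addn _ _ _ 1 s.+1 r) (subSn (ltnW lt_rs)) def_j.
apply/eqP; rewrite addrC subr_eq0; apply/eqP.
apply: eq_big_nat => k /andP[k_gt0 le_kj].
rewrite entry_pinv_aux; last by lia.
rewrite /imx_of; congr (_ * _); apply: entry_translate; try lia.
all: by apply: val_inj => /=; rewrite ?modn_mod // modnDml addnC.
Qed.

Lemma pinv_diag1 X i : pinv X 1 i = - X 1%N i.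
Proof.
by rewrite /pinv /= big_nat1 entry_shift /= /entry eqxx mulmx1 /phase /= valZpK.
Qed.

Lemma Mform_imx_of X :
  Mform (imx_of X) 1 (fun r => X 1%N (inZp r)) (fun r => X 2%N (inZp r)).
Proof.
exists (fun r s => imx_of X r s - imx1 _ r s).
  by apply: imxP => r s; rewrite /addimx addrC subrK.
split=> // [r s|r|r]; rewrite /imx1.
- rewrite addn1 ltnS leq_eqVlt => /orP[/eqP->|lt_sr]; first by rewrite imx_of_diag eqxx subrr.
  by rewrite upper_imx_of // gtn_eqF // subrr.
- by rewrite imx_of_shift // ltn_eqF ?subr0 // addn1.
- by rewrite -addnS imx_of_shift // ltn_eqF ?subr0 //; lia.
Qed.

Lemma has_form_of_Mform X L c1 c2 :
  Mform (imx_of X) L (fun r => dg c1 (inZp r)) (fun r => dg c2 (inZp r)) ->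
  has_form X L.-1 c1 c2.
Proof.
move=> [N eN [L_gt0 bN cN dN]].
have X_N k (i : 'I_3) : (0 < k)%N -> X k i = N i (i + k)%N.
  move=> k_gt0; rewrite -[in LHS](@valZpK 2 i) -imx_of_shift // eN /addimx /imx1.
  by rewrite ltn_eqF ?add0r //; lia.
rewrite /has_form prednK //; split; last split=> i.
- by move=> j i /andP[j_gt0 le_jL]; rewrite X_N // bN //; lia.
- by rewrite X_N // cN valZpK.
- by rewrite X_N // addnS dN valZpK.
Qed.

Lemma odd_bin2 m : odd m -> odd 'C(m, 2) = (m %% 4 == 3)%N.
Proof.
move=> om; rewrite bin2odd // oddM om /= -divn2.
have := modn2 m; have := modn2 (m.-1 %/ 2); rewrite om.
by case: (odd _) => /= half_mod2 m_mod2; apply/esym; [apply/eqP | apply/negbTE/eqP]; lia.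
Qed.

Lemma pow2_mod3 r : (2 ^ r %% 3 = if odd r then 2 else 1)%N.
Proof. by elim: r => // r IHr; rewrite expnS -modnMmr IHr /=; case: (odd r). Qed.

Ltac blk_compute := apply/matrixP; intros p q; apply/eqP;
  rewrite -?mulmxE !(mxE, big_ord_recr, big_ord0) /=;
  destruct p as [[|[|[|?]]] ?]; destruct q as [[|[|[|?]]] ?].

Lemma pchar2_blk : 2 \in [pchar blk].
Proof. by apply/andP; split=> //; apply/eqP; blk_compute. Qed.

Lemma dg_const t i : dg (t, t, t) i = dec t.
Proof. by rewrite /dg; case: (val i) => [|[|]]. Qed.

Lemma dec0 : dec 0 = 0.
Proof. by apply/matrixP => p q; rewrite !mxE div0n mod0n. Qed.

Lemma dec11_sqr : dec 11 * dec 11 = dec 26. Proof. by blk_compute. Qed.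
Lemma dec26_sqr : dec 26 * dec 26 = dec 11. Proof. by blk_compute. Qed.
Lemma dec17_26 : dec 17 + dec 26 = dec 11. Proof. by blk_compute. Qed.
Lemma comm_dec11_17 : GRing.comm (dec 11) (dec 17).
Proof. by rewrite /GRing.comm; blk_compute. Qed.

Lemma dec11_exp2 k : dec 11 ^+ (2 ^ k)%N = if odd k then dec 26 else dec 11.
Proof.
elim: k => [|k IHk]; first exact: expr1.
rewrite expnS mulnC exprM IHk expr2 /=.
by case: (odd k); rewrite /= ?dec11_sqr ?dec26_sqr.
Qed.

Local Notation X0 := (imx_of x0).

Lemma X0_Mform : Mform X0 1 (fun=> dec 11) (fun=> dec 17).
Proof. by apply: eq_Mform (Mform_imx_of x0) _ _ => r; rewrite /x0 /mkM /= dg_const. Qed.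

Lemma X0_exp_odd m : odd m ->
  Mform (expimx X0 m) 1 (fun=> dec 11) (fun=> dec 17 + dec 26 *+ (m %% 4 == 3)%N).
Proof.
move=> om; apply: eq_Mform (expMform1 m X0_Mform) _ _ => r /=.
  by rewrite mulrn_pchar2 ?om // pchar2_blk.
have m_pchar2 := mulrn_pchar2 pchar2_blk.
by rewrite [dec 17 *+ _]m_pchar2 [_ *+ 'C(_, _)]m_pchar2 om odd_bin2 // dec11_sqr.
Qed.

Lemma X0_exp_even m r : odd m ->
  Mform (expimx X0 (m * 2 ^ r.+1)) (2 ^ r.+1) (fun=> dec 11 ^+ (2 ^ r.+1)%N) (fun=> 0).
Proof.
move=> om; rewrite mulnC expimxM; last exact: upper_imx_of.
have pow2_gt1 : (1 < 2 ^ r.+1)%N by rewrite -[1%N]/(2 ^ 0)%N ltn_exp2l.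
have := expMform_pow2 pchar2_blk r comm_dec11_17 X0_Mform; rewrite muln1 => X0_pow2.
by apply: eq_Mform (expMform m pow2_gt1 X0_pow2) _ _ => s /=;
  rewrite (mulrn_pchar2 pchar2_blk) om ?mul0rn.
Qed.

Lemma X0_powers n : (0 < n)%N ->
  [\/ Mform (expimx X0 n) 1 (fun=> dec 11) (fun=> dec 17),
      Mform (expimx X0 n) 1 (fun=> dec 11) (fun=> dec 11),
      exists2 r, odd r & Mform (expimx X0 n) (2 ^ r) (fun=> dec 26) (fun=> 0) |
      exists2 r, (2 <= r)%N && ~~ odd r &
        Mform (expimx X0 n) (2 ^ r) (fun=> dec 11) (fun=> 0)].
Proof.
move=> n_gt0; have [m] := pfactor_coprime (isT : prime 2) n_gt0.
rewrite coprime_sym coprimen2 => om ->; case: (logn 2 n) => [|r].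
  rewrite muln1; have := X0_exp_odd om.
  by case: (m %% 4 == 3)%N; rewrite /= ?mulr1n ?mulr0n ?addr0 ?dec17_26 => EM;
    [apply: Or42 | apply: Or41].
have := X0_exp_even r om; rewrite dec11_exp2.
case odd_r: (odd r.+1) => EM; [apply: Or43 | apply: Or44]; exists r.+1 => //.
by rewrite odd_r andbT; case: r odd_r {EM}.
Qed.

Lemma has_form_const X L t1 t2 :
  Mform (imx_of X) L (fun=> dec t1) (fun=> dec t2) ->
  has_form X L.-1 (t1, t1, t1) (t2, t2, t2).
Proof.
by move=> EM; apply: has_form_of_Mform; apply: eq_Mform EM _ _ => r; rewrite dg_const.
Qed.

Lemma x0_powers n : (1 <= n)%N ->
     has_form (ppow x0 n) 0 (11, 11, 11)%N (17, 17, 17)%N \/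
     has_form (ppow x0 n) 0 (11, 11, 11)%N (11, 11, 11)%N \/
     (exists r : nat, (1 <= r)%N /\ odd r /\
        has_form (ppow x0 n) (2 ^ r - 1)%N (26, 26, 26)%N (0, 0, 0)%N) \/
     (exists r : nat, (2 <= r)%N /\ ~~ odd r /\
        has_form (ppow x0 n) (2 ^ r - 1)%N (11, 11, 11)%N (0, 0, 0)%N).
Proof.
case/X0_powers => [EM|EM|[r odd_r EM]|[r /andP[r_ge2 even_r] EM]];
  rewrite -imx_of_ppow -?dec0 in EM.
- by left; apply: has_form_const EM.
- by right; left; apply: has_form_const EM.
- right; right; left; exists r; rewrite subn1.
  by split; [case: r odd_r {EM} | split=> //; apply: has_form_const EM].
- right; right; right; exists r; rewrite subn1.
  by do 2 split => //; apply: has_form_const EM.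
Qed.

Local Notation T2 := (46, 68, 217)%N.

Lemma y0_Mform n L c d : Mform (expimx X0 n) L (fun=> c) (fun=> d) ->
  Mform (imx_of (ppow y0 n)) L (fun=> c)
    (fun r => d + dg T2 (inZp r) * c - c * dg T2 (inZp (r + L))).
Proof.
have x2_inv := imx_of_pinv x2.
have x2_linv := mulimx_linv (upper_imx_of _) (upper_imx_of _) x2_inv (imx_of_pinv _).
move=> EM; rewrite imx_of_ppow /y0 !imx_of_pmul expimx_conj //; last exact: upper_imx_of.
apply: eq_Mform (conjMform (Mform_imx_of x2) (Mform_imx_of (pinv x2)) x2_inv EM) _ _ => // r.
by rewrite /= !pinv_diag1 /x2 /mkM /= mulrN.
Qed.

Lemma y0_has_form n L t1 d t2 : Mform (expimx X0 n) L (fun=> dec t1) (fun=> d) ->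
  (forall i : 'I_3, d + dg T2 i * dec t1 - dec t1 * dg T2 (inZp (i + L %% 3)) = dg t2 i) ->
  has_form (ppow y0 n) L.-1 (t1, t1, t1) t2.
Proof.
move=> EM diag2; apply: has_form_of_Mform; apply: eq_Mform (y0_Mform EM) _ _ => r /=.
  by rewrite dg_const.
rewrite -diag2; congr (_ + - (_ * dg _ _)).
by apply: val_inj; rewrite /= modnDm.
Qed.

Lemma y0_diag2_1mod4 (i : 'I_3) :
  dec 17 + dg T2 i * dec 11 - dec 11 * dg T2 (inZp (i + 1)) = dg (44, 219, 177) i.
Proof. by case: i => [[|[|[|]]] ?] //=; blk_compute. Qed.

Lemma y0_diag2_3mod4 (i : 'I_3) :
  dec 11 + dg T2 i * dec 11 - dec 11 * dg T2 (inZp (i + 1)) = dg (54, 193, 171) i.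
Proof. by case: i => [[|[|[|]]] ?] //=; blk_compute. Qed.

Lemma y0_diag2_pow2_odd (i : 'I_3) :
  0 + dg T2 i * dec 26 - dec 26 * dg T2 (inZp (i + 2)) = dg (0, 157, 106) i.
Proof. by case: i => [[|[|[|]]] ?] //=; blk_compute. Qed.

Lemma y0_diag2_pow2_even (i : 'I_3) :
  0 + dg T2 i * dec 11 - dec 11 * dg T2 (inZp (i + 1)) = dg (61, 202, 160) i.
Proof. by case: i => [[|[|[|]]] ?] //=; blk_compute. Qed.

Lemma y0_powers n : (1 <= n)%N ->
     has_form (ppow y0 n) 0 (11, 11, 11)%N (44, 219, 177)%N \/
     has_form (ppow y0 n) 0 (11, 11, 11)%N (54, 193, 171)%N \/
     (exists r : nat, (1 <= r)%N /\ odd r /\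
        has_form (ppow y0 n) (2 ^ r - 1)%N (26, 26, 26)%N (0, 157, 106)%N) \/
     (exists r : nat, (2 <= r)%N /\ ~~ odd r /\
        has_form (ppow y0 n) (2 ^ r - 1)%N (11, 11, 11)%N (61, 202, 160)%N).
Proof.
case/X0_powers => [EM|EM|[r odd_r EM]|[r /andP[r_ge2 even_r] EM]].
- by left; apply: (y0_has_form EM); exact: y0_diag2_1mod4.
- by right; left; apply: (y0_has_form EM); exact: y0_diag2_3mod4.
- right; right; left; exists r; rewrite subn1; split; first by case: r odd_r {EM}.
  split=> //; apply: (y0_has_form EM) => i.
  by rewrite pow2_mod3 odd_r; exact: y0_diag2_pow2_odd.
- right; right; right; exists r; rewrite subn1; do 2 split => //.
  apply: (y0_has_form EM) => i.
  by rewrite pow2_mod3 (negbTE even_r); exact: y0_diag2_pow2_even.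
Qed.

Theorem proposition4p5 :
  (forall n : nat, (1 <= n)%N ->
     has_form (ppow x0 n) 0 (11, 11, 11)%N (17, 17, 17)%N \/
     has_form (ppow x0 n) 0 (11, 11, 11)%N (11, 11, 11)%N \/
     (exists r : nat, (1 <= r)%N /\ odd r /\
        has_form (ppow x0 n) (2 ^ r - 1)%N (26, 26, 26)%N (0, 0, 0)%N) \/
     (exists r : nat, (2 <= r)%N /\ ~~ odd r /\
        has_form (ppow x0 n) (2 ^ r - 1)%N (11, 11, 11)%N (0, 0, 0)%N)) /\
  (forall n : nat, (1 <= n)%N ->
     has_form (ppow y0 n) 0 (11, 11, 11)%N (44, 219, 177)%N \/
     has_form (ppow y0 n) 0 (11, 11, 11)%N (54, 193, 171)%N \/
     (exists r : nat, (1 <= r)%N /\ odd r /\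
        has_form (ppow y0 n) (2 ^ r - 1)%N (26, 26, 26)%N (0, 157, 106)%N) \/
     (exists r : nat, (2 <= r)%N /\ ~~ odd r /\
        has_form (ppow y0 n) (2 ^ r - 1)%N (11, 11, 11)%N (61, 202, 160)%N)).
Proof. split; [exact: x0_powers | exact: y0_powers]. Qed.
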